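(* For any metric space $(\mathcal{X},\rho)$, any $\gamma>0$, and any integer $1\le d\le|\mathsf{C}(\mathcal{X},\rho,2\gamma)|$, there exists a class $\mathcal{H}\subseteq\{-1,+1\}^{\mathcal{X}}$ with $\mathsf{vc}(\mathcal{H})=d$ such that for any (possibly randomized) online learner there exists a sequence $(x_1,y_1),\dots,(x_T,y_T)\in\mathcal{X}\times\{-1,+1\}$ with $$\sum_{t=1}^T\mathbb{E}\,\mathbb{1}[\hat y_t\neq y_t]-\mathsf{OPT}^{\gamma}_{\mathrm{pert}}\ge\Omega\!\left(\sqrt{T\cdot\mathsf{vc}(\mathcal{H})\ln\!\left(\frac{|\mathsf{C}(\mathcal{X},\rho,2\gamma)|}{\mathsf{vc}(\mathcal{H})}\right)}\right),$$ where $\mathsf{OPT}^{\gamma}_{\mathrm{pert}}=\min_{h\in\mathcal{H}}\sum_{t=1}^T\max_{z_t\in B(x_t,\gamma)}\mathbb{1}[h(z_t)\neq y_t]$.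
   Context: Online binary classification: on rounds $t=1,\dots,T$ the adversary reveals $x_t\in\mathcal{X}$, the learner outputs $\hat y_t\in\{-1,+1\}$, then $y_t$ is revealed; the expectation is over the learner's randomness. $\mathsf{vc}$ is the VC dimension. $B(x,\gamma)=\{z\in\mathcal{X}:\rho(x,z)\le\gamma\}$. A $\gamma$-cover of $\mathcal{X}$ is a set $\mathcal{Z}\subseteq\mathcal{X}$ such that every $x\in\mathcal{X}$ is within $\rho$-distance $\gamma$ of some element of $\mathcal{Z}$; $|\mathsf{C}(\mathcal{X},\rho,\gamma)|$ denotes the minimal cardinality of a $\gamma$-cover. $\Omega(\cdot)$ hides a positive absolute constant. *)

From HB Require Import structures.
From mathcomp Require Import all_boot all_order all_algebra.
From mathcomp Require Import all_classical all_reals all_analysis.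
From mathcomp Require Import Rstruct.
Set Implicit Arguments. Unset Strict Implicit. Unset Printing Implicit Defensive.
Import Order.TTheory GRing.Theory Num.Theory.
Local Open Scope classical_set_scope.
Local Open Scope ring_scope.

Section Defs.
Variable R : realType.
Variable X : Type.

Definition is_metric (rho : X -> X -> R) : Prop :=
  [/\ (forall x y, 0 <= rho x y),
      (forall x y, rho x y = 0 <-> x = y),
      (forall x y, rho x y = rho y x) &
      (forall x y z, rho x z <= rho x y + rho y z)].

Definition ball_rho (rho : X -> X -> R) (x : X) (gamma : R) : set X :=
  [set z | rho x z <= gamma].

Definition is_cover (rho : X -> X -> R) (gamma : R) (Z : set X) : Prop :=
  forall x : X, exists2 z, Z z & rho x z <= gamma.

(* N = |C(X, rho, gamma)|: the minimal cardinality of a gamma-cover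
   (here assumed to be finite: some finite cover exists). *)
Definition covering_number (rho : X -> X -> R) (gamma : R) (N : nat) : Prop :=
  (exists Z : set X, is_cover rho gamma Z /\ (Z #= `I_N)%card) /\
  (forall (Z : set X) (n : nat), is_cover rho gamma Z -> (Z #= `I_n)%card -> (N <= n)%N).

(* labels {-1,+1} are encoded as bool (true = +1, false = -1) *)
Definition shatters (H : set (X -> bool)) (S : set X) : Prop :=
  forall f : X -> bool, exists2 h, H h & forall x, S x -> h x = f x.

Definition vc_dim (H : set (X -> bool)) (d : nat) : Prop :=
  (exists S : set X, (S #= `I_d)%card /\ shatters H S) /\
  (forall (S : set X) (n : nat), (S #= `I_n)%card -> shatters H S -> (n <= d)%N).

(* A (possibly randomized) online learner: given the history
   [(x_1,y_1);...;(x_{t-1},y_{t-1})] and x_t, it returns the probability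
   that it predicts hat y_t = +1 (true). *)
Definition learner := seq (X * bool) -> X -> R.

Definition valid_learner (L : learner) : Prop :=
  forall hist x, 0 <= L hist x <= 1.

Fixpoint exp_mistakes_from (L : learner) (hist : seq (X * bool))
    (s : seq (X * bool)) : R :=
  match s with
  | [::] => 0
  | (x, y) :: s' =>
      (if y then 1 - L hist x else L hist x)
      + exp_mistakes_from L (rcons hist (x, y)) s'
  end.

Definition exp_mistakes (L : learner) (s : seq (X * bool)) : R :=
  exp_mistakes_from L [::] s.

Definition pert_loss (rho : X -> X -> R) (gamma : R) (h : X -> bool)
    (p : X * bool) : R :=
  sup [set ((h z != p.2)%:R : R) | z in ball_rho rho p.1 gamma].

Definition opt_pert (rho : X -> X -> R) (gamma : R) (H : set (X -> bool))
    (s : seq (X * bool)) : R :=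
  inf [set (\sum_(p <- s) pert_loss rho gamma h p) | h in H].

End Defs.

From HB Require Import structures.
From mathcomp Require Import all_boot all_order all_algebra.
From mathcomp Require Import all_classical all_reals all_analysis.
From mathcomp Require Import Rstruct.
From mathcomp Require Import ring lra zify.
Set Implicit Arguments. Unset Strict Implicit. Unset Printing Implicit Defensive.
Import Order.TTheory GRing.Theory Num.Theory.
Local Open Scope classical_set_scope.
Local Open Scope ring_scope.

(* Take N points at pairwise distance > 2 gamma (a packing is at
   least as large as a minimal 2 gamma-cover), so that their gamma-balls are
   disjoint and a perturbation never leaves the ball of a point.  Split them
   into d groups of K = N / d points and view each group as a binary tree of
   depth k ~ log2 (N / d).  A hypothesis picks in every tree a root-to-leaf path
   and labels +1 the balls of the nodes where the path turns right; a shattered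
   set meets each tree at most once, so vc = d.  The adversary plays
   B = min (d k, T) blocks of about T / B copies of one node with uniformly
   random labels, the next node following the majority label of the block.
   Every learner then errs T / 2 times on average, whereas the hypothesis
   following the majorities errs only on the minorities, i.e. T / 2 minus
   E |S_m| / 2 per block for a Rademacher sum S_m.  Khintchine's inequality
   E |S_m| >= sqrt m / 5 yields regret >= B sqrt (T / B) / 10
   >= sqrt (T d ln (N / d)) / 20 on average, hence for some label sequence. *)

Section Average.
Variable R : numFieldType.

Fixpoint avg (n : nat) (F : seq bool -> R) : R :=
  if n is n'.+1 then
    (avg n' (fun u => F (true :: u)) + avg n' (fun u => F (false :: u))) / 2
  else F [::].

Lemma eq_avg n (F G : seq bool -> R) :
  (forall u, size u = n -> F u = G u) -> avg n F = avg n G.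
Proof.
elim: n F G => [|n IH] F G eqFG /=; first exact: eqFG.
by congr ((_ + _) / 2); apply: IH => u su; apply: eqFG; rewrite /= su.
Qed.

Lemma avgD n F G : avg n (fun u => F u + G u) = avg n F + avg n G.
Proof.
elim: n F G => [|n IH] F G //=.
by rewrite (IH (fun u => F (true :: u))) (IH (fun u => F (false :: u))); ring.
Qed.

Lemma avgZ n a F : avg n (fun u => a * F u) = a * avg n F.
Proof.
elim: n F => [|n IH] F //=.
by rewrite (IH (fun u => F (true :: u))) (IH (fun u => F (false :: u))); ring.
Qed.

Lemma avgN n F : avg n (fun u => - F u) = - avg n F.
Proof.
by rewrite -mulN1r -avgZ; apply: eq_avg => u _; rewrite mulN1r.
Qed.

Lemma avgB n F G : avg n (fun u => F u - G u) = avg n F - avg n G.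
Proof. by rewrite avgD avgN. Qed.

Lemma avg_cst n a : avg n (fun _ => a) = a.
Proof. by elim: n => [|n IH] //=; rewrite IH; field. Qed.

Lemma avg_cat n1 n2 F :
  avg (n1 + n2) F = avg n1 (fun u => avg n2 (fun v => F (u ++ v))).
Proof.
elim: n1 F => [|n1 IH] F //=.
by rewrite (IH (fun u => F (true :: u))) (IH (fun u => F (false :: u))).
Qed.

Lemma ler_avg n F G : (forall u, size u = n -> F u <= G u) -> avg n F <= avg n G.
Proof.
elim: n F G => [|n IH] F G leFG /=; first exact: leFG.
rewrite ler_pM2r ?invr_gt0 //.
by apply: lerD; apply: IH => u su; apply: leFG; rewrite /= su.
Qed.

Lemma avg_ge0 n F : (forall u, size u = n -> 0 <= F u) -> 0 <= avg n F.
Proof. by move=> F0; rewrite -(avg_cst n 0); apply: ler_avg. Qed.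

End Average.

Lemma exists_ge_avg (R : realFieldType) n (F : seq bool -> R) :
  exists2 u, size u = n & avg n F <= F u.
Proof.
elim: n F => [|n IH] F /=; first by exists [::].
have [u su leFu] := IH (fun u => F (true :: u)).
have [v sv leFv] := IH (fun u => F (false :: u)).
have [le|lt] := lerP (avg n (fun u => F (false :: u))) (avg n (fun u => F (true :: u))).
- by exists (true :: u); [rewrite /= su | lra].
- by exists (false :: v); [rewrite /= sv | lra].
Qed.

Section SignSum.
Variable R : numFieldType.

Fixpoint signsum (u : seq bool) : R :=
  if u is y :: u' then (if y then 1 else -1) + signsum u' else 0.

Lemma signsum_count u : signsum u = (count id u)%:R - (count negb u)%:R.
Proof. by elim: u => [|[] u IH] /=; rewrite ?subr0 ?IH ?natrS; ring. Qed.

Lemma avg_signsumS n (F : R -> R) :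
  avg n.+1 (fun u => F (signsum u)) =
  avg n (fun u => (F (1 + signsum u) + F (-1 + signsum u)) / 2).
Proof.
rewrite [RHS](eq_avg (G := fun u => 2^-1 * (F (1 + signsum u) + F (-1 + signsum u)))).
  by rewrite avgZ avgD /= mulrC.
by move=> u _; rewrite mulrC.
Qed.

Lemma avg_signsum2 n : avg n (fun u => signsum u ^+ 2) = n%:R.
Proof.
elim: n => [|n IH]; first by rewrite /= expr0n.
rewrite (avg_signsumS n (fun x => x ^+ 2)).
rewrite (eq_avg (G := fun u => signsum u ^+ 2 + 1)); last by move=> u _; field.
by rewrite avgD IH avg_cst -natr1.
Qed.

Lemma avg_signsum4 n : avg n (fun u => signsum u ^+ 4) = 3 * n%:R ^+ 2 - 2 * n%:R.
Proof.
elim: n => [|n IH]; first by rewrite /= expr0n /=; ring.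
rewrite (avg_signsumS n (fun x => x ^+ 4)).
rewrite (eq_avg (G := fun u => signsum u ^+ 4 + (6 * signsum u ^+ 2 + 1)));
  last by move=> u _; field.
by rewrite !avgD avgZ IH avg_signsum2 avg_cst -natr1; ring.
Qed.

End SignSum.

Lemma sqr_le_linear_quartic (R : realFieldType) (a t : R) :
  0 < a -> 0 <= t -> t ^+ 2 <= a * t + t ^+ 4 / a ^+ 2.
Proof.
move=> a0 t0; have a20 : 0 < a ^+ 2 by rewrite exprn_gt0.
have t40 : 0 <= t ^+ 4 / a ^+ 2 by rewrite divr_ge0 ?exprn_ge0 // ltW.
have [le_ta|lt_at] := lerP t a.
- have : t * t <= a * t by exact: ler_wpM2r.
  by rewrite -expr2; lra.
- have at2 : a ^+ 2 <= t ^+ 2 by rewrite !expr2; nra.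
  have : t ^+ 2 <= t ^+ 4 / a ^+ 2.
    by rewrite ler_pdivlMr // (_ : 4 = 2 + 2)%N // exprD ler_wpM2l ?exprn_ge0.
  have : 0 <= a * t by rewrite mulr_ge0 // ltW.
  lra.
Qed.

(* A Khintchine-type bound obtained from the second and fourth moments:
   E S^2 <= a E|S| + E S^4 / a^2, and a^2 = 6n makes the last term at most n/2. *)
Lemma avg_abs_signsum_sqr (R : rcfType) n :
  n%:R <= 24 * avg n (fun u => `|signsum R u|) ^+ 2.
Proof.
set E := avg n _.
have E0 : 0 <= E by apply: avg_ge0.
case: n => [|m] in E E0 *; first by rewrite mulr_ge0 ?exprn_ge0.
set n := m.+1.
have n0 : 0 < (n%:R : R) by rewrite ltr0n.
pose a := Num.sqrt (6 * n%:R : R).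
have a0 : 0 < a by rewrite sqrtr_gt0 mulr_gt0.
have a2 : a ^+ 2 = 6 * n%:R by rewrite sqr_sqrtr // ltW // mulr_gt0.
have moments : avg n (fun u => signsum R u ^+ 2) <=
    avg n (fun u => a * `|signsum R u| + (a ^+ 2)^-1 * signsum R u ^+ 4).
  apply: ler_avg => u _; rewrite (mulrC _^-1).
  have := sqr_le_linear_quartic a0 (normr_ge0 (signsum R u)).
  by rewrite -[4%N]/(2 * 2)%N !exprM !real_normK ?num_real.
rewrite avgD !avgZ avg_signsum2 avg_signsum4 a2 -/E in moments.
have half : n%:R / 2 <= a * E.
  have -> : n%:R / 2 = n%:R - (6 * n%:R)^-1 * (3 * n%:R ^+ 2 - 2 * n%:R) - 3^-1 :> R.
    by field; rewrite pnatr_eq0.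
  lra.
have aE0 : 0 <= a * E := mulr_ge0 (ltW a0) E0.
have : (n%:R / 2) ^+ 2 <= (a * E) ^+ 2 by rewrite ler_pXn2r // nnegrE divr_ge0.
rewrite [(a * E) ^+ 2]exprMn a2 -(ler_pM2l n0); nra.
Qed.

Lemma sqrt_le_avg_abs_signsum (R : rcfType) n :
  Num.sqrt (n%:R : R) / 5 <= avg n (fun u => `|signsum R u|).
Proof.
set E := avg n _.
have E0 : 0 <= E by apply: avg_ge0.
have := avg_abs_signsum_sqr R n; rewrite -/E => sq.
rewrite -(@ler_pXn2r _ 2) ?nnegrE ?divr_ge0 ?sqrtr_ge0 //.
rewrite exprMn sqr_sqrtr // exprVn.
have -> : (5 : R) ^+ 2 = 25 by rewrite expr2 -natrM.
by rewrite ler_pdivrMr //; have := sqr_ge0 E; lra.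
Qed.

Lemma sum_avg_abs_signsum_ge (R : rcfType) q ms : all (leq q) ms ->
  (size ms)%:R * Num.sqrt (q%:R : R) / 10 <=
  \sum_(m <- ms) avg m (fun u => `|signsum R u|) / 2.
Proof.
elim: ms => [|m ms IH] /=; first by rewrite big_nil !mul0r.
move=> /andP [qm /IH le_sum]; rewrite big_cons -natr1.
have : Num.sqrt (q%:R : R) <= Num.sqrt m%:R by rewrite ler_sqrt ?ler_nat.
have := sqrt_le_avg_abs_signsum R m.
lra.
Qed.

Section Majority.
Variable R : numFieldType.

Definition majority (u : seq bool) := (count negb u <= count id u)%N.

Definition minority (u : seq bool) : R := ((size u)%:R - `|signsum R u|) / 2.

Lemma count_minority u : (count (fun y => y != majority u) u)%:R = minority u.
Proof.
have size_u : size u = (count id u + count negb u)%N by rewrite -(count_predC id u).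
rewrite /minority signsum_count size_u natrD /majority; case: leqP => [le_ft | lt_tf].
- have -> : count (fun y => y != true) u = count negb u by apply: eq_count; case.
  by rewrite ger0_norm ?subr_ge0 ?ler_nat //; field.
- have -> : count (fun y => y != false) u = count id u by apply: eq_count; case.
  by rewrite ler0_norm ?subr_le0 ?ler_nat 1?ltnW //; field.
Qed.

Fixpoint blocks_minority (ms : seq nat) (ys : seq bool) : R :=
  if ms is m :: ms' then minority (take m ys) + blocks_minority ms' (drop m ys) else 0.

Lemma avg_blocks_minority ms :
  avg (sumn ms) (blocks_minority ms) = \sum_(m <- ms) avg m minority.
Proof.
elim: ms => [|m ms IH] /=; first by rewrite big_nil.
rewrite big_cons avg_cat -IH.
rewrite (eq_avg (G := fun u => minority u + avg (sumn ms) (blocks_minority ms))).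
  by rewrite avgD avg_cst.
move=> u su; rewrite -[X in X + _](avg_cst (sumn ms)) -avgD.
by apply: eq_avg => v _; rewrite /= take_size_cat // drop_size_cat.
Qed.

Lemma avg_minority m :
  avg m minority = m%:R / 2 - avg m (fun u => `|signsum R u|) / 2.
Proof.
rewrite (eq_avg (G := fun u => 2^-1 * m%:R - 2^-1 * `|signsum R u|)).
  by rewrite avgB !avgZ avg_cst; field.
by move=> u su; rewrite /minority su; field.
Qed.

End Majority.

Lemma sum_natr_count (R : pzSemiRingType) (T : Type) (P : pred T) (u : seq T) :
  \sum_(y <- u) (P y)%:R = (count P u)%:R :> R.
Proof. by elim: u => [|y u IH]; rewrite ?big_nil ?big_cons ?IH //= natrD. Qed.

Section LearnerAverage.
Variables (R : realType) (X : Type) (L : learner R X).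

Lemma exp_mistakes_from_cat hist s1 s2 :
  exp_mistakes_from L hist (s1 ++ s2) =
  exp_mistakes_from L hist s1 + exp_mistakes_from L (hist ++ s1) s2.
Proof.
elim: s1 hist => [|[x y] s1 IH] hist /=; first by rewrite cats0 add0r.
by rewrite IH cat_rcons addrA.
Qed.

Lemma avg_exp_mistakes_from_query hist x m :
  avg m (fun u => exp_mistakes_from L hist [seq (x, y) | y <- u]) = m%:R / 2.
Proof.
elim: m hist => [|m IH] hist /=; first by rewrite mul0r.
by rewrite !avgD !avg_cst !IH -natr1; field.
Qed.

End LearnerAverage.

Section Metric.
Variables (R : realType) (X : Type) (rho : X -> X -> R).
Hypothesis rho_metric : is_metric rho.

Lemma rho_xx x : rho x x = 0.
Proof. by case: rho_metric => _ rho0 _ _; apply/rho0. Qed.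

Lemma rho_sym x y : rho x y = rho y x.
Proof. by case: rho_metric. Qed.

Lemma rho_triangle x y z : rho x z <= rho x y + rho y z.
Proof. by case: rho_metric. Qed.

Lemma ball_rho_center x gam : 0 <= gam -> ball_rho rho x gam x.
Proof. by rewrite /ball_rho /= rho_xx. Qed.

Lemma ball_rho_disjoint gam x y z :
  2 * gam < rho x y -> ball_rho rho x gam z -> ball_rho rho y gam z -> False.
Proof.
rewrite /ball_rho /= => xy xz yz.
by have := rho_triangle x z y; rewrite (rho_sym z y); lra.
Qed.

Lemma pert_loss_ge0 gam h p : 0 <= gam -> 0 <= pert_loss rho gam h p.
Proof.
move=> gam_ge0; have center := ball_rho_center p.1 gam_ge0.
have bounded : has_sup [set ((h z != p.2)%:R : R) | z in ball_rho rho p.1 gam].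
  split; first by exists (h p.1 != p.2)%:R, p.1.
  by exists 1 => _ [z _ <-]; case: (h z != p.2).
apply: (@le_trans _ _ (h p.1 != p.2)%:R) => //.
by apply: sup_upper_bound => //; exists p.1.
Qed.

Definition separated (gam : R) (c : nat -> X) (m : nat) :=
  forall i j, (i < m)%N -> (j < m)%N -> i != j -> gam < rho (c i) (c j).

Variables (gam : R) (N : nat).
Hypotheses (gam_ge0 : 0 <= gam) (covN : covering_number rho gam N).

Lemma separated_extend c m : separated gam c m -> (m < N)%N ->
  exists x, forall i, (i < m)%N -> gam < rho x (c i).
Proof.
move=> sep_c mN; apply: contrapT => no_far.
have c_inj : {in `I_m &, injective c}.
  move=> i j /set_mem /= im /set_mem /= jm cij; apply/eqP; apply: contraT => ij.
  by have := sep_c i j im jm ij; rewrite cij rho_xx ltNge gam_ge0.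
have cover : is_cover rho gam (c @` `I_m).
  move=> x; have /existsNP [i /not_implyP [im /negP]] :
    ~ (forall i, (i < m)%N -> gam < rho x (c i)) by move=> far; apply: no_far; exists x.
  by rewrite -leNgt => xi; exists (c i) => //; exists i.
by have := covN.2 _ _ cover (inj_card_eq c_inj); rewrite leqNgt mN.
Qed.

Lemma covering_number_inhabited : (0 < N)%N -> inhabited X.
Proof.
move=> N0; apply: contrapT => X0.
have cover : is_cover rho gam set0 by move=> x; case: X0; constructor.
have I0 : `I_0 = set0 :> set nat by apply/seteqP; split.
have := covN.2 _ 0%N cover; rewrite I0 leqn0 => /(_ (card_eq00 _ _)) /eqP N00.
by rewrite N00 in N0.
Qed.

Lemma packing_of_covering_number : (0 < N)%N -> exists c, separated gam c N.
Proof.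
move=> /covering_number_inhabited [x0].
suff packing m : (m <= N)%N -> exists c, separated gam c m by exact: packing.
elim: m => [|m IH] mN; first by exists (fun _ => x0).
have [c sep_c] := IH (ltnW mN).
have [x far_x] := separated_extend sep_c mN.
exists (fun i => if i == m then x else c i) => i j; rewrite !ltnS => im jm ij.
case: ifP => [/eqP ei | /negbT im']; case: ifP => [/eqP ej | /negbT jm'].
- by rewrite ei ej eqxx in ij.
- by apply: far_x; rewrite ltn_neqAle jm' jm.
- by rewrite rho_sym; apply: far_x; rewrite ltn_neqAle im' im.
- by apply: sep_c; rewrite // ltn_neqAle ?im' ?jm'.
Qed.

End Metric.

Fixpoint node_code (r : seq bool) : nat :=
  if r is b :: r' then ((node_code r').*2.+1 + b)%N else 0%N.

Lemma node_code_inj : injective node_code.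
Proof.
elim=> [|b1 r1 IH] [|b2 r2] //= eq_code.
have [-> /IH ->] : b1 = b2 /\ node_code r1 = node_code r2.
  by case: b1 b2 eq_code => [] [] /=; lia.
by [].
Qed.

Lemma node_code_lt r : ((node_code r).+2 <= 2 ^ (size r).+1)%N.
Proof. by elim: r => [|[] r IH] //=; rewrite expnS; lia. Qed.

(* The node reached from the root by the branches f 0, ..., f n.-1, listed
   from the deepest one up. *)
Fixpoint tree_node (f : nat -> bool) (n : nat) : seq bool :=
  if n is n'.+1 then f n' :: tree_node f n' else [::].

Lemma size_tree_node f n : size (tree_node f n) = n.
Proof. by elim: n => //= n ->. Qed.

Lemma eq_tree_node f f' n :
  (forall l, (l < n)%N -> f l = f' l) -> tree_node f n = tree_node f' n.
Proof.
elim: n => [|n IH] //= eq_ff'.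
by rewrite eq_ff' // IH // => l ln; apply: eq_ff'; apply: ltnW.
Qed.

Lemma tree_node_inj f f' n n' : tree_node f n = tree_node f' n' ->
  n = n' /\ forall l, (l < n)%N -> f l = f' l.
Proof.
move=> eq_node.
have en : n = n' by rewrite -(size_tree_node f n) eq_node size_tree_node.
split=> //; subst n'.
elim: n eq_node => [|n IH] //= [fn /IH eq_below] l.
by rewrite ltnS leq_eqVlt => /orP [/eqP -> | /eq_below].
Qed.

Section TreeClass.
Variables (R : realType) (X : Type) (rho : X -> X -> R) (gamma : R).
Hypotheses (rho_metric : is_metric rho) (gamma_gt0 : 0 < gamma).
Variables (N d K k : nat) (c : nat -> X).
Hypotheses (sep_c : separated rho (2 * gamma) c N) (dKN : (d * K <= N)%N).
Hypotheses (kK : (2 ^ k <= K.+1)%N) (k_gt0 : (0 < k)%N).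

Local Notation B x := (ball_rho rho x gamma).

(* Group g < d owns the centers c (g * K + j), j < K, one for each node code
   of a binary tree of depth k. *)
Definition node_center g j := c (g * K + j).

Definition path_center (S : nat -> nat -> bool) g n :=
  node_center g (node_code (tree_node (S g) n)).

Lemma K_gt0 : (0 < K)%N.
Proof. by have := leq_trans (ltn_expl k (ltnSn 1)) kK; lia. Qed.

Lemma node_index_lt g j : (g < d)%N -> (j < K)%N -> (g * K + j < N)%N.
Proof. by move=> gd jK; apply: leq_trans dKN; nia. Qed.

Lemma node_index_inj g j g' j' : (j < K)%N -> (j' < K)%N ->
  (g * K + j = g' * K + j')%N -> g = g' /\ j = j'.
Proof.
move=> jK j'K e.
have eg : g = g'.
  by have := congr1 (divn^~ K) e; rewrite !divnMDl ?K_gt0 // !divn_small // !addn0.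
by subst g'; split=> //; apply: addnI e.
Qed.

Lemma tree_node_code_lt f n : (n < k)%N -> (node_code (tree_node f n) < K)%N.
Proof.
move=> nk; have := node_code_lt (tree_node f n); rewrite size_tree_node => lt_code.
have : (2 ^ n.+1 <= 2 ^ k)%N by rewrite leq_exp2l.
by lia.
Qed.

Lemma ball_node_center_inj g j g' j' z : (g < d)%N -> (j < K)%N -> (g' < d)%N -> (j' < K)%N ->
  B (node_center g j) z -> B (node_center g' j') z -> g = g' /\ j = j'.
Proof.
move=> gd jK g'd j'K bz b'z; apply: node_index_inj => //.
apply/eqP; apply: contraT => ne.
have far := sep_c (node_index_lt gd jK) (node_index_lt g'd j'K) ne.
by case: (ball_rho_disjoint rho_metric far bz b'z).
Qed.

Definition tree_hyp (S : nat -> nat -> bool) (x : X) : bool :=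
  `[< exists g n, [/\ (g < d)%N, (n < k)%N, B (path_center S g n) x & S g n] >].

Definition tree_class : set (X -> bool) := range tree_hyp.

Lemma tree_hyp_path (S S' : nat -> nat -> bool) g n x : (g < d)%N -> (n < k)%N ->
  B (path_center S g n) x -> tree_hyp S' x ->
  tree_node (S' g) n = tree_node (S g) n /\ S' g n.
Proof.
move=> gd nk bx /asboolP [g' [n' [g'd n'k b'x S'n']]].
have [eg /node_code_inj enode] := ball_node_center_inj g'd (tree_node_code_lt (S' g') n'k)
  gd (tree_node_code_lt (S g) nk) b'x bx.
subst g'; have [en _] := tree_node_inj enode.
by subst n'.
Qed.

Lemma tree_hyp_path_center S g n x : (g < d)%N -> (n < k)%N ->
  B (path_center S g n) x -> tree_hyp S x = S g n.
Proof.
move=> gd nk bx; case Sn: (S g n); first by apply/asboolP; exists g, n.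
by apply/negbTE/negP => /(tree_hyp_path gd nk bx) [_]; rewrite Sn.
Qed.

(* Monotonicity along a path: labelling a node +1 forces +1 on every earlier
   node where the path turns right. *)
Lemma tree_hyp_path_below (S S' : nat -> nat -> bool) g n1 n2 x1 x2 :
  (g < d)%N -> (n1 <= n2)%N -> (n2 < k)%N -> S g n1 ->
  B (path_center S g n1) x1 -> B (path_center S g n2) x2 ->
  tree_hyp S' x2 -> tree_hyp S' x1.
Proof.
move=> gd n12 n2k Sn1 b1 b2 /(tree_hyp_path gd n2k b2) [/tree_node_inj [_ agree] S'n2].
have n1k := leq_ltn_trans n12 n2k.
have ecenter : path_center S' g n1 = path_center S g n1.
  rewrite /path_center (@eq_tree_node (S' g) (S g)) // => l ln1.
  by apply: agree; apply: leq_trans n12.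
rewrite -ecenter in b1; rewrite (tree_hyp_path_center gd n1k b1).
by move: n12; rewrite leq_eqVlt => /orP [/eqP -> // | /agree ->].
Qed.

Lemma tree_class_shatters_roots :
  shatters tree_class ((node_center ^~ 0%N) @` `I_d).
Proof.
move=> f; pose S g (_ : nat) := f (node_center g 0).
exists (tree_hyp S); first by exists S.
move=> _ [g /= gd <-].
exact: (@tree_hyp_path_center _ g 0%N) (ball_rho_center rho_metric _ (ltW gamma_gt0)).
Qed.

Lemma roots_card : ((node_center ^~ 0%N) @` `I_d #= `I_d)%card.
Proof.
apply: inj_card_eq => g g' /set_mem /= gd /set_mem /= g'd e.
have b := ball_rho_center rho_metric (node_center g 0) (ltW gamma_gt0).
have b' := b; rewrite [in X in X _]e in b'.
by have [] := ball_node_center_inj gd K_gt0 g'd K_gt0 b b'.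
Qed.

Lemma shattered_path_points_eq Sx (S : nat -> nat -> bool) g n1 n2 x1 x2 :
  shatters tree_class Sx ->
  Sx x1 -> Sx x2 -> (g < d)%N -> (n1 <= n2)%N -> (n2 < k)%N -> S g n1 ->
  B (path_center S g n1) x1 -> B (path_center S g n2) x2 -> x1 = x2.
Proof.
move=> sh S1 S2 gd n12 n2k Sn1 b1 b2.
have [_ [S' _ <-] realize] := sh (fun z => `[< z = x2 >]).
have : tree_hyp S' x2 by rewrite realize //; apply/asboolP.
by move/(tree_hyp_path_below gd n12 n2k Sn1 b1 b2); rewrite realize // => /asboolP.
Qed.

Lemma shattered_card_le Sx n : (Sx #= `I_n)%card -> shatters tree_class Sx -> (n <= d)%N.
Proof.
move=> cardS sh.
have [_ [S _ <-] all_true] := sh (fun _ => true).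
pose in_group x g := (g < d)%N /\ exists l, [/\ (l < k)%N, B (path_center S g l) x & S g l].
pose group x := xget 0%N (in_group x).
have group_spec x : Sx x -> in_group x (group x).
  move=> Sxx; apply: xgetPex; have /asboolP [g [l [gd lk bx Sl]]] := all_true x Sxx.
  by exists g; split=> //; exists l.
have group_inj : {in Sx &, injective group}.
  move=> x1 x2 /set_mem S1 /set_mem S2 eg.
  have [gd [n1 [n1k b1 Sn1]]] := group_spec x1 S1.
  have [_ [n2 [n2k b2 Sn2]]] := group_spec x2 S2; rewrite -eg in b2 Sn2.
  have [n12|n21] := leqP n1 n2; first exact: shattered_path_points_eq b1 b2.
  exact/esym/(shattered_path_points_eq sh S2 S1 gd (ltnW n21) n1k Sn2 b2 b1).
rewrite -card_le_II -(card_le_eql cardS); apply/card_subP.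
exists (group @` Sx); first exact: inj_card_eq.
by move=> _ [x Sxx <-]; have [] := group_spec x Sxx.
Qed.

Lemma tree_class_vc_dim : vc_dim tree_class d.
Proof.
split; last exact: shattered_card_le.
exists ((node_center ^~ 0%N) @` `I_d).
by split; [exact: roots_card | exact: tree_class_shatters_roots].
Qed.

Lemma pert_loss_path_center S g n y : (g < d)%N -> (n < k)%N ->
  pert_loss rho gamma (tree_hyp S) (path_center S g n, y) = (S g n != y)%:R.
Proof.
move=> gd nk; rewrite /pert_loss /= -[RHS]sup1; congr sup.
have center := ball_rho_center rho_metric (path_center S g n) (ltW gamma_gt0).
apply/seteqP; split=> [_ [z bz <-] | _ ->] /=; first by rewrite (tree_hyp_path_center gd nk bz).
by exists (path_center S g n); rewrite // (tree_hyp_path_center gd nk center).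
Qed.

Definition bits_sig (bs : seq bool) g l := nth false bs (g * k + l).

Definition query (bs : seq bool) : X :=
  path_center (bits_sig bs) (size bs %/ k) (size bs %% k).

Fixpoint adversary (bs : seq bool) (ms : seq nat) (ys : seq bool) : seq (X * bool) :=
  if ms is m :: ms' then
    [seq (query bs, y) | y <- take m ys] ++
    adversary (rcons bs (majority (take m ys))) ms' (drop m ys)
  else [::].

Fixpoint final_bits (bs : seq bool) (ms : seq nat) (ys : seq bool) : seq bool :=
  if ms is m :: ms' then final_bits (rcons bs (majority (take m ys))) ms' (drop m ys)
  else bs.

Lemma size_adversary ms bs ys : size ys = sumn ms -> size (adversary bs ms ys) = sumn ms.
Proof.
elim: ms bs ys => [|m ms IH] bs ys //= sy.
rewrite size_cat size_map size_take IH; last by rewrite size_drop sy addKn.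
by rewrite sy; case: ltnP; lia.
Qed.

Lemma nth_final_bits ms bs ys i :
  (i < size bs)%N -> nth false (final_bits bs ms ys) i = nth false bs i.
Proof.
elim: ms bs ys => [|m ms IH] //= bs ys ib.
by rewrite IH ?nth_rcons ?ib // size_rcons ltnW.
Qed.

Lemma nth_final_bits_size m ms bs ys :
  nth false (final_bits bs (m :: ms) ys) (size bs) = majority (take m ys).
Proof. by rewrite /= nth_final_bits ?size_rcons // nth_rcons ltnn eqxx. Qed.

Lemma query_final_bits ms bs ys : (size bs < d * k)%N ->
  query bs = path_center (bits_sig (final_bits bs ms ys)) (size bs %/ k) (size bs %% k).
Proof.
move=> bdk; rewrite /query /path_center.
rewrite (eq_tree_node (f' := bits_sig (final_bits bs ms ys) (size bs %/ k))) // => l lk.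
rewrite /bits_sig nth_final_bits //.
by rewrite {2}(divn_eq (size bs) k) ltn_add2l.
Qed.

(* The hypothesis read off the final bits follows, at every queried node, the
   majority label of the corresponding block. *)
Lemma sum_pert_loss_adversary ms bs ys : (size bs + size ms <= d * k)%N ->
  \sum_(p <- adversary bs ms ys)
     pert_loss rho gamma (tree_hyp (bits_sig (final_bits bs ms ys))) p =
  blocks_minority R ms ys.
Proof.
elim: ms bs ys => [|m ms IH] bs ys /=; first by rewrite big_nil.
move=> hsize; rewrite big_cat -(IH (rcons bs (majority (take m ys))) (drop m ys)) /=;
  last by rewrite size_rcons addSnnS.
congr (_ + _); rewrite big_map -count_minority -sum_natr_count.
have bdk : (size bs < d * k)%N by lia.
apply: eq_bigr => y _; rewrite (query_final_bits (m :: ms) ys bdk) pert_loss_path_center.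
- by rewrite /bits_sig -divn_eq nth_final_bits_size eq_sym.
- by rewrite ltn_divLR.
- by rewrite ltn_pmod.
Qed.

Lemma opt_pert_adversary ms ys : (size ms <= d * k)%N ->
  opt_pert rho gamma tree_class (adversary [::] ms ys) <= blocks_minority R ms ys.
Proof.
move=> hsize; rewrite -(@sum_pert_loss_adversary ms [::] ys) //.
set S := bits_sig (final_bits [::] ms ys).
apply: ge_inf; last by exists (tree_hyp S) => //; exists S.
by exists 0 => _ [h _ <-]; apply: sumr_ge0 => p _; apply/pert_loss_ge0/ltW.
Qed.

Lemma avg_exp_mistakes_adversary (L : learner R X) ms bs hist :
  avg (sumn ms) (fun ys => exp_mistakes_from L hist (adversary bs ms ys)) =
  (sumn ms)%:R / 2.
Proof.
elim: ms bs hist => [|m ms IH] bs hist /=; first by rewrite mul0r.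
pose block (u : seq bool) := [seq (query bs, y) | y <- u].
rewrite avg_cat (eq_avg (G := fun u => exp_mistakes_from L hist (block u) + (sumn ms)%:R / 2)).
  by rewrite avgD avg_cst avg_exp_mistakes_from_query natrD; field.
move=> u su; rewrite -(IH (rcons bs (majority u)) (hist ++ block u)).
rewrite -[X in X + _](avg_cst (sumn ms)) -avgD.
by apply: eq_avg => v _; rewrite take_size_cat // drop_size_cat // exp_mistakes_from_cat.
Qed.

Lemma avg_regret_adversary (L : learner R X) ms :
  avg (sumn ms) (fun ys => exp_mistakes L (adversary [::] ms ys) - blocks_minority R ms ys) =
  \sum_(m <- ms) avg m (fun u => `|signsum R u|) / 2.
Proof.
rewrite avgB avg_exp_mistakes_adversary avg_blocks_minority.
under eq_bigr do rewrite avg_minority.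
rewrite big_split /= sumrN -!mulr_suml -natr_sum -sumnE; ring.
Qed.

Lemma adversary_regret (L : learner R X) ms q :
  (size ms <= d * k)%N -> all (leq q) ms ->
  exists s, size s = sumn ms /\
    (size ms)%:R * Num.sqrt (q%:R : R) / 10 <=
    exp_mistakes L s - opt_pert rho gamma tree_class s.
Proof.
move=> hsize hq.
pose regret ys := exp_mistakes L (adversary [::] ms ys) - blocks_minority R ms ys.
have [ys sy le_avg] := exists_ge_avg (sumn ms) regret.
exists (adversary [::] ms ys); split; first exact: size_adversary.
apply: le_trans (sum_avg_abs_signsum_ge R hq) _.
rewrite -(avg_regret_adversary L); apply: le_trans le_avg _.
by rewrite lerD2l lerN2 opt_pert_adversary.
Qed.

End TreeClass.

Lemma exists_tree_shape (R : realType) d N : (0 < d)%N -> (d <= N)%N ->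
  exists K k, [/\ (d * K <= N)%N, (2 ^ k <= K.+1)%N, (0 < k)%N &
                  ln (N%:R / d%:R : R) <= 2 * k%:R].
Proof.
move=> d0 dN; set K := (N %/ d)%N; set k := trunc_log 2 K.+1.
have K0 : (0 < K)%N by rewrite divn_gt0.
have k0 : (0 < k)%N by rewrite trunc_log_gt0.
exists K, k; split=> //; first by rewrite mulnC leq_trunc_div.
  exact: trunc_logP.
have N_le : (N <= d * 2 ^ k.+1)%N.
  have := ltn_ceil N d0; have := trunc_log_ltn K.+1 (ltnSn 1); rewrite -/k -/K; nia.
have d0R : (0 : R) < d%:R by rewrite ltr0n.
have Nd_pos : (0 : R) < N%:R / d%:R by rewrite divr_gt0 // ltr0n (leq_trans d0 dN).
have : ln (N%:R / d%:R : R) <= ln ((2 ^ k.+1)%:R).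
  by rewrite ler_ln ?posrE ?ltr0n ?expn_gt0 // ler_pdivrMr // -natrM ler_nat mulnC.
rewrite natrX lnXn // -mulr_natr -natr1 => le_ln.
have ln2 : ln (2 : R) <= 1 by have := @le_ln1Dx R 1 ltac:(lra); rewrite (_ : 1 + 1 = 2).
have : (1 : R) <= k%:R by rewrite ler1n.
nra.
Qed.

Lemma exists_block_lengths T B : (0 < B)%N -> (B <= T)%N ->
  exists ms, [/\ size ms = B, sumn ms = T & all (leq (T %/ B)%N) ms].
Proof.
move=> B0 BT; exists (rcons (nseq B.-1 (T %/ B)%N) (T %/ B + T %% B)%N); split.
- by rewrite size_rcons size_nseq prednK.
- by rewrite sumn_rcons sumn_nseq addnA -mulnSr prednK // {3}(divn_eq T B) mulnC.
- by rewrite all_rcons leq_addr /=; apply/allP => _ /nseqP [-> _].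
Qed.

Lemma sqrt_le_blocks (R : rcfType) T B (D : R) : (0 < B)%N -> (B <= T)%N ->
  0 <= D -> D <= 2 * B%:R ->
  Num.sqrt (T%:R * D) / 20 <= B%:R * Num.sqrt (T %/ B)%N%:R / 10.
Proof.
move=> B0 BT D0 DB; set q := (T %/ B)%N.
have TqB : (T <= 2 * q * B)%N.
  have := divn_eq T B; have := ltn_pmod T B0; have : (0 < q)%N by rewrite divn_gt0.
  rewrite -/q; nia.
have TqBR : (T%:R : R) <= 2 * q%:R * B%:R by rewrite -!natrM ler_nat.
rewrite -(@ler_pXn2r _ 2) ?nnegrE ?divr_ge0 ?mulr_ge0 ?sqrtr_ge0 //.
rewrite !exprMn !sqr_sqrtr ?mulr_ge0 //.
have : (T%:R : R) * D <= 2 * q%:R * B%:R * (2 * B%:R) by apply: ler_pM.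
rewrite !exprVn -!natrX /=; lra.
Qed.

Theorem theorem4 :
  exists c : Rdefinitions.R, 0 < c /\
  forall (X : Type) (rho : X -> X -> Rdefinitions.R) (gamma : Rdefinitions.R)
         (N d : nat),
    is_metric rho -> 0 < gamma ->
    covering_number rho (2 * gamma) N ->
    (1 <= d)%N -> (d <= N)%N ->
    exists H : set (X -> bool),
      vc_dim H d /\
      forall T : nat,
        (d%:R * ln (N%:R / d%:R) <= T%:R :> Rdefinitions.R) ->
        forall L : learner Rdefinitions.R X, valid_learner L ->
        exists s : seq (X * bool),
          size s = T /\
          exp_mistakes L s - opt_pert rho gamma H s
            >= c * Num.sqrt (T%:R * d%:R * ln (N%:R / d%:R)).
Proof.
exists (1 / 20); split=> // X rho gamma N d rho_metric gamma_gt0 covN d0 dN.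
have gamma2_ge0 : 0 <= 2 * gamma by rewrite mulr_ge0 // ltW.
have [c sep_c] := packing_of_covering_number rho_metric gamma2_ge0 covN (leq_trans d0 dN).
have [K [k [dKN kK k0 lnk]]] := exists_tree_shape Rdefinitions.R d0 dN.
have vc := tree_class_vc_dim rho_metric gamma_gt0 sep_c dKN kK k0.
exists (tree_class rho gamma d K k c); split=> // T DT L _.
have regret := adversary_regret rho_metric gamma_gt0 sep_c dKN kK k0 L.
have [->|T0] := posnP T.
  have [s [s0 le_regret]] := regret [::] 0%N isT isT.
  by exists s; split=> //; move: le_regret; rewrite !mul0r sqrtr0 mulr0.
set B := minn (d * k) T.
have B0 : (0 < B)%N by rewrite leq_min muln_gt0 d0 k0.
have [ms [sms Tms qms]] := exists_block_lengths B0 (geq_minr _ _).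
have [s [sT le_regret]] := regret ms _ ltac:(by rewrite sms geq_minl) qms.
exists s; split; first by rewrite sT Tms.
apply: le_trans le_regret; rewrite sms div1r mulrC -[_ * _ * ln _]mulrA.
have Nd_ge1 : 1 <= N%:R / d%:R :> Rdefinitions.R by rewrite ler_pdivlMr ?ltr0n // mul1r ler_nat.
apply: sqrt_le_blocks => //; [exact: geq_minr | by rewrite mulr_ge0 ?ln_ge0 |].
rewrite /B; case: leqP => _.
- by rewrite natrM mulrCA ler_wpM2l.
- by have := ler0n Rdefinitions.R T; lra.
Qed.
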